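(* Let $V\subseteq\mathbb{R}^d$ be a finite set containing at least two distinct points, and let $p\in V$. Then $$\Pr_{(i,\theta)\sim D_2(V)}\big[\theta\text{ lies between }0\text{ and }p_i\big]\le\frac{2\|p\|_2^2}{L_2(V)}.$$
   Context: For each dimension $i$, let $\ell_i=\min_{v\in V}v_i$, $u_i=\max_{v\in V}v_i$, and let $\mathcal{I}_i$ be the set of consecutive intervals $[a,b]$ (with $a<b$) into which $[\ell_i,u_i]$ is partitioned by the projections $\{v_i:v\in V\}$. Let $\mathcal{I}_{\mathrm{all}}(V)=\{(i,[a,b]):i\in[d],[a,b]\in\mathcal{I}_i\}$ and $L_2(V)=\sum_{(i,[a,b])\in\mathcal{I}_{\mathrm{all}}(V)}(b-a)^2$. The distribution $D_2(V)$ over threshold cuts $(i,\theta)$: choose $(i,[a,b])\in\mathcal{I}_{\mathrm{all}}(V)$ with probability $(b-a)^2/L_2(V)$, then choose $\theta\in[a,b]$ with density $P_{a,b}(\theta)=\frac{4}{(b-a)^2}\min(\theta-a,b-\theta)$. The event in the claim is that the cut $(i,\theta)$ separates the origin from $p$. *)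

From Stdlib Require Import Reals.
From Coquelicot Require Hierarchy RInt.
From mathcomp Require Import all_boot all_order all_algebra.
From mathcomp Require Import Rstruct.
Set Implicit Arguments. Unset Strict Implicit. Unset Printing Implicit Defensive.
Import Order.TTheory GRing.Theory Num.Theory.
Local Open Scope ring_scope.

Definition projs (d : nat) (V : seq 'rV[R]_d) (i : 'I_d) : seq R :=
  sort <=%R (undup [seq (v : 'rV[R]_d) ord0 i | v <- V]).

(* I_i : consecutive intervals [a,b] (a<b) partitioning [l_i,u_i] *)
Definition intervals (d : nat) (V : seq 'rV[R]_d) (i : 'I_d) : seq (R * R) :=
  let s := projs V i in zip s (behead s).

Definition L2 (d : nat) (V : seq 'rV[R]_d) : R :=
  \sum_(i < d) \sum_(ab <- intervals V i) (ab.2 - ab.1) ^+ 2.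

Definition Pab (a b theta : R) : R :=
  4 / (b - a) ^+ 2 * Num.min (theta - a) (b - theta).

(* Pr_{theta ~ P_{a,b}}[theta in [lo,hi]] = integral of the density over
   [a,b] ∩ [lo,hi] (0 if the intersection is empty) *)
Definition mass (a b lo hi : R) : R :=
  let c := Num.max a lo in let e := Num.min b hi in
  if c <= e then @RInt.RInt Hierarchy.R_CompleteNormedModule (Pab a b) c e else 0.

Definition prob_between (d : nat) (V : seq 'rV[R]_d) (p : 'rV[R]_d) : R :=
  \sum_(i < d) \sum_(ab <- intervals V i)
     ((ab.2 - ab.1) ^+ 2 / L2 V) *
     mass ab.1 ab.2 (Num.min 0 (p ord0 i)) (Num.max 0 (p ord0 i)).

Definition sqnorm (d : nat) (p : 'rV[R]_d) : R := \sum_(i < d) p ord0 i ^+ 2.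

(* On an interval [a, b] the density P_{a,b}(t) is bounded both by the ramp
   4 (t - a) / (b - a)^2 and by the ramp 4 (b - t) / (b - a)^2, so a piece
   [c, e] of [a, b] that shares an endpoint with [a, b] has mass at most
   2 (e - c)^2 / (b - a)^2.  Since p_i is itself one of the breakpoints of
   coordinate i, the segment between 0 and p_i meets every interval of I_i in
   such a piece, and after weighting by (b - a)^2 / L_2(V) the interval
   contributes at most 2 (e - c)^2 / L_2(V).  These pieces tile the segment,
   so their squared lengths add up to at most p_i^2; summing over i gives
   2 ||p||^2 / L_2(V). *)

From Stdlib Require Import Reals Lra.
From Coquelicot Require Import Coquelicot.

Local Open Scope R_scope.

Lemma continuous_Rmin (f g : R -> R) (x : R) :
  continuous f x -> continuous g x -> continuous (fun t => Rmin (f t) (g t)) x.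
Proof.
intros hf hg.
apply continuous_ext with (fun t => (f t + g t - Rabs (f t - g t)) * / 2).
{ intros t; unfold Rmin, Rabs.
  destruct (Rle_dec (f t) (g t)), (Rcase_abs (f t - g t)); lra. }
apply (continuous_mult _ (fun _ => / 2)); [|apply continuous_const].
apply (continuous_minus (fun t => f t + g t)).
- now apply (continuous_plus f g).
- now apply continuous_Rabs_comp, (continuous_minus f g).
Qed.

Lemma is_RInt_ramp_up (K c e : R) :
  is_RInt (fun t => K * (t - c)) c e (K * (e - c) ^ 2 / 2).
Proof.
replace (K * (e - c) ^ 2 / 2) with (minus (K * (e - c) ^ 2 / 2) (K * (c - c) ^ 2 / 2))
  by (unfold minus, plus, opp; simpl; field).
apply (is_RInt_derive (fun t => K * (t - c) ^ 2 / 2)).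
- intros t _; auto_derive; [easy | field].
- intros t _; apply (ex_derive_continuous (fun t => K * (t - c))); auto_derive; easy.
Qed.

Lemma is_RInt_ramp_down (K c e : R) :
  is_RInt (fun t => K * (e - t)) c e (K * (e - c) ^ 2 / 2).
Proof.
replace (K * (e - c) ^ 2 / 2) with (minus (- K * (e - e) ^ 2 / 2) (- K * (e - c) ^ 2 / 2))
  by (unfold minus, plus, opp; simpl; field).
apply (is_RInt_derive (fun t => - K * (e - t) ^ 2 / 2)).
- intros t _; auto_derive; [easy | field].
- intros t _; apply (ex_derive_continuous (fun t => K * (e - t))); auto_derive; easy.
Qed.

Lemma RInt_tent_le (K a b c e : R) :
  0 <= K -> a <= c <= e -> e <= b -> c = a \/ e = b ->
  RInt (fun t => K * Rmin (t - a) (b - t)) c e <= K * (e - c) ^ 2 / 2.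
Proof.
intros hK [hac hce] heb hend.
assert (htent : is_RInt (fun t => K * Rmin (t - a) (b - t)) c e
                  (RInt (fun t => K * Rmin (t - a) (b - t)) c e)).
{ apply (@RInt_correct R_CompleteNormedModule), (@ex_RInt_continuous R_CompleteNormedModule).
  intros z _.
  apply (continuous_mult (fun _ => K)); [apply continuous_const|].
  apply continuous_Rmin;
    [apply (ex_derive_continuous (fun t => t - a)) | apply (ex_derive_continuous (fun t => b - t))];
    auto_derive; easy. }
destruct hend as [-> | ->].
- apply (is_RInt_le _ _ a e _ _ hce htent (is_RInt_ramp_up K a e)).
  intros t _; apply Rmult_le_compat_l; [exact hK | apply Rmin_l].
- apply (is_RInt_le _ _ c b _ _ hce htent (is_RInt_ramp_down K c b)).
  intros t _; apply Rmult_le_compat_l; [exact hK | apply Rmin_r].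
Qed.

Local Close Scope R_scope.
From mathcomp Require Import all_boot all_order all_algebra Rstruct lra.
Import Order.TTheory GRing.Theory Num.Theory.
Local Open Scope ring_scope.

Lemma RInt_Pab_le (a b c e : R) : a <= c <= e -> e <= b -> c = a \/ e = b ->
  (b - a) ^+ 2 * RInt (Pab a b) c e <= 2 * (e - c) ^+ 2.
Proof.
move=> /andP[hac hce] heb hend.
set K := 4 / (b - a) ^+ 2.
have hK : 0 <= K by rewrite divr_ge0 ?sqr_ge0.
(* [Pab] was elaborated with Stdlib's [Rmult], [Rdiv] and the literal [IZR 4]. *)
have -> : RInt (Pab a b) c e = RInt (fun t => K * Rmin (t - a) (b - t)) c e.
  by apply: RInt_ext => t _; rewrite /Pab RminE RmultE RdivE IZRposE INRE.
have /RleP := RInt_tent_le K a b c e (RleP hK) (conj (RleP hac) (RleP hce)) (RleP heb) hend.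
rewrite RmultE RdivE RpowE RminusE IZRposE INRE /= => hI.
(* When [a = b], [K] is [4 / 0 = 0]. *)
have hscale : (b - a) ^+ 2 * K <= 4.
  have [->|hba] := eqVneq (b - a) 0; first by rewrite expr0n /= mul0r.
  by rewrite /K mulrCA divff ?mulr1 // sqrf_eq0.
have := ler_wpM2r (sqr_ge0 (e - c)) hscale.
have := ler_wpM2l (sqr_ge0 (b - a)) hI.
lra.
Qed.

Definition clamp (lo hi y : R) : R := Num.min (Num.max y lo) hi.

Lemma clamp_le_hi (lo hi y : R) : clamp lo hi y <= hi.
Proof. by rewrite /clamp ge_min lexx orbT. Qed.

Lemma clamp_ge_lo (lo hi y : R) : lo <= hi -> lo <= clamp lo hi y.
Proof. by move=> hlo; rewrite /clamp le_min hlo le_max lexx orbT. Qed.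

Lemma clamp_homo (lo hi : R) : {homo clamp lo hi : y z / y <= z}.
Proof. by move=> y z hyz; rewrite /clamp le_min2 // le_max2. Qed.

Lemma mass_le (a b lo hi : R) : lo <= a \/ b <= hi ->
  (b - a) ^+ 2 * mass a b lo hi <= 2 * (clamp lo hi b - clamp lo hi a) ^+ 2.
Proof.
rewrite /mass /=; case: ifPn => [hce hend|_ _]; last by rewrite mulr0 mulr_ge0 ?sqr_ge0.
have hac : a <= Num.max a lo by rewrite le_max lexx.
have heb : Num.min b hi <= b by rewrite ge_min lexx.
have -> : clamp lo hi b = Num.min b hi.
  by rewrite /clamp max_l // (le_trans _ heb) // (le_trans _ hce) // le_max lexx orbT.
have -> : clamp lo hi a = Num.max a lo.
  by rewrite /clamp min_l // (le_trans hce) // ge_min lexx orbT.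
apply: RInt_Pab_le; rewrite ?hac ?hce //.
by case: hend => [/max_l ->|/min_l ->]; [left|right].
Qed.

Lemma mem_zip_fst {S U : eqType} {s : seq S} {t : seq U} {a : S} {b : U} :
  (a, b) \in zip s t -> a \in s.
Proof.
elim: s t => [|x s IH] [|y t] //=; rewrite !inE => /orP[/eqP[-> _]|/IH ->].
  by rewrite eqxx.
by rewrite orbT.
Qed.

Lemma sorted_zip_behead_gap {T : eqType} {leT : rel T} {s : seq T} {a b : T} :
  reflexive leT -> transitive leT -> sorted leT s -> (a, b) \in zip s (behead s) ->
  leT a b /\ {in s, forall z, leT z a || leT b z}.
Proof.
move=> leT_refl leT_tr.
elim: s => [//|x [//|y t] IH] /= /andP[lexy hpath].
have le_y : {in y :: t, forall z, leT y z}.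
  by move=> z; rewrite inE => /orP[/eqP->|/(allP (order_path_min leT_tr hpath))].
rewrite inE => /orP[/eqP[-> ->]|hab].
  by split=> // z; rewrite inE => /orP[/eqP->|/le_y->]; rewrite ?leT_refl ?orbT.
have [leab gap] := IH hpath hab.
split=> // z; rewrite inE => /orP[/eqP->|]; last exact: gap.
by rewrite (leT_tr _ _ _ lexy (le_y _ (mem_zip_fst hab))).
Qed.

Lemma sum_zip_behead_telescope (T : Type) (V : zmodType) (f : T -> V) (x : T) (t : seq T) :
  \sum_(ab <- zip (x :: t) t) (f ab.2 - f ab.1) = f (last x t) - f x.
Proof.
elim: t x => [|y t IH] x /=; first by rewrite big_nil subrr.
by rewrite big_cons IH /= addrC addrA subrK.
Qed.

Lemma sum_sqr_clamp_steps_le (lo hi : R) (s : seq R) : lo <= hi -> sorted <=%R s ->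
  \sum_(ab <- zip s (behead s)) (clamp lo hi ab.2 - clamp lo hi ab.1) ^+ 2 <= (hi - lo) ^+ 2.
Proof.
move=> lohi; case: s => [|x t] hs; first by rewrite big_nil sqr_ge0.
have step_range y z : y <= z -> 0 <= clamp lo hi z - clamp lo hi y <= hi - lo.
  by move=> yz; rewrite subr_ge0 clamp_homo // lerB ?clamp_le_hi ?clamp_ge_lo.
apply: (le_trans (y := \sum_(ab <- zip (x :: t) t)
                          (hi - lo) * (clamp lo hi ab.2 - clamp lo hi ab.1))).
  rewrite big_seq [X in _ <= X]big_seq; apply: ler_sum => -[a b] hab /=.
  have [ab _] := sorted_zip_behead_gap lexx le_trans hs hab.
  have /andP[step_ge0 step_le] := step_range _ _ ab.
  by rewrite expr2 ler_wpM2r.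
rewrite -mulr_sumr sum_zip_behead_telescope expr2 ler_wpM2l ?subr_ge0 //.
by rewrite lerB ?clamp_le_hi ?clamp_ge_lo.
Qed.

Lemma sum_mass_le (s : seq R) (lo hi x : R) : sorted <=%R s -> x \in s -> lo <= x <= hi ->
  \sum_(ab <- zip s (behead s)) (ab.2 - ab.1) ^+ 2 * mass ab.1 ab.2 lo hi <= 2 * (hi - lo) ^+ 2.
Proof.
move=> hs xs /andP[lox xhi].
apply: (le_trans (y := \sum_(ab <- zip s (behead s))
                          2 * (clamp lo hi ab.2 - clamp lo hi ab.1) ^+ 2)).
  rewrite big_seq [X in _ <= X]big_seq; apply: ler_sum => -[a b] hab /=.
  apply: mass_le; have [_ gap] := sorted_zip_behead_gap lexx le_trans hs hab.
  by case/orP: (gap x xs) => [xa|bx]; [left; apply: le_trans xa | right; apply: le_trans xhi].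
by rewrite -mulr_sumr ler_wpM2l // sum_sqr_clamp_steps_le // (le_trans lox xhi).
Qed.

Theorem lemma4p3 (d : nat) (V : seq 'rV[R]_d) (p : 'rV[R]_d) :
  (exists u v, [/\ u \in V, v \in V & u != v]) ->
  p \in V ->
  prob_between V p <= 2 * sqnorm p / L2 V.
Proof.
move=> _ pV.
have L2_ge0 : 0 <= L2 V.
  by rewrite sumr_ge0 // => i _; rewrite sumr_ge0 // => ab _; rewrite sqr_ge0.
rewrite /prob_between /sqnorm mulr_sumr mulr_suml; apply: ler_sum => i _.
under eq_bigr do rewrite mulrAC.
rewrite -mulr_suml ler_wpM2r ?invr_ge0 //.
set x := p ord0 i.
have hs : sorted <=%R (projs V i) := sort_sorted le_total _.
have xs : x \in projs V i.
  by rewrite mem_sort mem_undup (map_f (fun v : 'rV[R]_d => v ord0 i)).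
have -> : x ^+ 2 = (Num.max 0 x - Num.min 0 x) ^+ 2.
  by case: (leP 0 x) => _; rewrite ?subr0 ?sub0r ?sqrrN.
by apply: sum_mass_le hs xs _; rewrite ge_min lexx orbT le_max lexx orbT.
Qed.
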